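(* Let $R,K$ be positive integers, $m=RK$, $p\in[0,1]$. In a serial-star network with $R$ branches of $K$ sensors, let $\mathcal{T}$ be the random set of measurements reaching the fusion center. Write $$h(x)=\left[\frac{1-p+p^{K+1}x^K(1-x)}{1-px}\right]^R=\sum_{i=0}^m d_i x^i$$ (a polynomial in $x$). Then $\mathbb{P}\{|\mathcal{T}|=i\}=d_i$ for every $i=0,1,\ldots,m$.
   Context: Serial-star network: in each of the $R$ branches, sensor $j$ ($j=1,\ldots,K$) forwards all measurements it holds (its own plus those received from sensor $j-1$) to sensor $j+1$, and sensor $K$ forwards to the fusion center. Each of the $RK$ links is an independent Bernoulli erasure channel that delivers the transmitted data with probability $p$ and loses it otherwise; hence the measurement of sensor $j$ in a branch reaches the fusion center iff all $K-j+1$ links from sensor $j$ to the fusion center succeed. *)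

From HB Require Import structures.
From mathcomp Require Import all_boot all_order all_algebra.
Set Implicit Arguments. Unset Strict Implicit. Unset Printing Implicit Defensive.
Import Order.TTheory GRing.Theory Num.Theory.
Local Open Scope ring_scope.

(* Link (r, j) (0-indexed,
   j : 'I_K) is the link leaving sensor j of branch r (towards sensor j+1, or
   towards the fusion center when j = K-1).  An outcome of the RK independent
   Bernoulli erasure channels is a boolean configuration (true = delivered). *)
Definition config (R K : nat) := {ffun 'I_R * 'I_K -> bool}.

Definition weight (F : ringType) (R K : nat) (p : F) (w : config R K) : F :=
  \prod_(l : 'I_R * 'I_K) (if w l then p else 1 - p).

(* Measurement of sensor s = (r, j) reaches the fusion center iff all links
   from sensor j to the fusion center (links j, ..., K-1 of branch r) succeed. *)
Definition reaches (R K : nat) (w : config R K) (s : 'I_R * 'I_K) : bool :=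
  [forall l : 'I_K, (s.2 <= l)%N ==> w (s.1, l)].

Definition received (R K : nat) (w : config R K) : {set 'I_R * 'I_K} :=
  [set s | reaches w s].

Definition prob_card (F : ringType) (R K : nat) (p : F) (i : nat) : F :=
  \sum_(w : config R K | #|received w| == i) weight p w.

From HB Require Import structures.
From mathcomp Require Import all_boot all_order all_algebra.
From mathcomp Require Import ring.
Import Order.TTheory GRing.Theory Num.Theory.
Set Implicit Arguments. Unset Strict Implicit. Unset Printing Implicit Defensive.
Local Open Scope ring_scope.

(* Links of different branches are independent and |T| is the sum of the
   per-branch counts, so the generating polynomial E[x^|T|] is the R-th power
   of the generating function S_K of a single branch.  Prepending a link in
   front of a branch adds the measurement of the new first sensor exactly when
   all links succeed, whence S_(K+1) = S_K + (x - 1) p^(K+1) x^K, S_0 = 1 and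
   S_K (1 - p x) = 1 - p + p^(K+1) x^K (1 - x).  Since p >= 0, the hypothesis on
   the d_i applies at every x = -k, and polynomials agreeing at infinitely many
   points are equal. *)

Section FfunCons.
Variables (T : Type) (n : nat).

Definition ffun_cons (t : T) (g : {ffun 'I_n -> T}) : {ffun 'I_n.+1 -> T} :=
  [ffun i => if unlift ord0 i is Some j then g j else t].

Lemma ffun_cons0 t g : ffun_cons t g ord0 = t.
Proof. by rewrite ffunE unlift_none. Qed.

Lemma ffun_consS t g j : ffun_cons t g (lift ord0 j) = g j.
Proof. by rewrite ffunE liftK. Qed.

End FfunCons.

Lemma forall_ordSl n (P : pred 'I_n.+1) :
  [forall i, P i] = P ord0 && [forall i : 'I_n, P (lift ord0 i)].
Proof.
apply/forallP/andP => [allP | [P0 /forallP PS] i]; first by split; last apply/forallP.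
by case: (unliftP ord0 i) => [j ->|->].
Qed.

Lemma big_ffunSl (R : Type) (idx : R) (op : Monoid.com_law idx) (T : finType) n
    (G : {ffun 'I_n.+1 -> T} -> R) :
  \big[op/idx]_f G f =
  \big[op/idx]_(t : T) \big[op/idx]_(g : {ffun 'I_n -> T}) G (ffun_cons t g).
Proof.
rewrite pair_big (reindex (fun tg : T * {ffun 'I_n -> T} => ffun_cons tg.1 tg.2)) //.
apply: onW_bij.
exists (fun f : {ffun 'I_n.+1 -> T} => (f ord0, [ffun j : 'I_n => f (lift ord0 j)])).
- move=> [t g]; rewrite ffun_cons0; congr pair.
  by apply/ffunP => j; rewrite ffunE ffun_consS.
- move=> f; apply/ffunP => i; rewrite ffunE.
  by case: unliftP => [j ->|->]; rewrite ?ffunE.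
Qed.

Lemma forall_ffun_true n (g : {ffun 'I_n -> bool}) :
  [forall i, g i] = (g == [ffun=> true]).
Proof.
apply/forallP/eqP => [gT | -> i]; last by rewrite ffunE.
by apply/ffunP => i; rewrite ffunE gT.
Qed.

Section Branch.
Variables (F : comNzRingType) (p x : F).

Definition branch_weight K (v : {ffun 'I_K -> bool}) : F :=
  \prod_(j < K) (if v j then p else 1 - p).

Definition branch_received K (v : {ffun 'I_K -> bool}) : nat :=
  \sum_(j < K) [forall l : 'I_K, (j <= l)%N ==> v l].

Definition branch_gf K : F :=
  \sum_(v : {ffun 'I_K -> bool}) branch_weight v * x ^+ branch_received v.

Lemma branch_weight_cons K b (g : {ffun 'I_K -> bool}) :
  branch_weight (ffun_cons b g) = (if b then p else 1 - p) * branch_weight g.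
Proof.
rewrite /branch_weight big_ord_recl ffun_cons0.
by under eq_bigr do rewrite ffun_consS.
Qed.

Lemma branch_received_cons K b (g : {ffun 'I_K -> bool}) :
  branch_received (ffun_cons b g) = ((b && [forall l, g l]) + branch_received g)%N.
Proof.
rewrite /branch_received big_ord_recl forall_ordSl /= ffun_cons0.
under eq_forallb do rewrite ffun_consS.
congr (_ + _)%N; apply: eq_bigr => j _; rewrite forall_ordSl /=.
by under eq_forallb do rewrite ffun_consS /bump !add1n ltnS.
Qed.

Lemma branch_weight_true K : branch_weight (K := K) [ffun=> true] = p ^+ K.
Proof.
by rewrite /branch_weight; under eq_bigr do rewrite ffunE; rewrite prodr_const card_ord.
Qed.

Lemma branch_received_true K : branch_received (K := K) [ffun=> true] = K.
Proof.
rewrite /branch_received; under eq_bigr => j _.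
  rewrite (_ : [forall l, _] = true); last first.
    by apply/forallP => l; rewrite ffunE implybT.
  over.
by rewrite sum_nat_const card_ord muln1.
Qed.

Lemma branch_gf0 : branch_gf 0 = 1.
Proof.
rewrite /branch_gf (eq_bigr (fun _ => 1)); last first.
  by move=> v _; rewrite /branch_weight /branch_received !big_ord0 mul1r.
by rewrite sumr_const card_ffun card_ord expn0.
Qed.

Lemma branch_gfS K :
  branch_gf K.+1 = branch_gf K + (x - 1) * p ^+ K.+1 * x ^+ K.
Proof.
rewrite /branch_gf big_ffunSl big_bool /=.
under eq_bigr do rewrite branch_weight_cons branch_received_cons.
under [X in _ + X]eq_bigr do rewrite branch_weight_cons branch_received_cons add0n -mulrA.
have split_all_true (g : {ffun 'I_K -> bool}) :
  p * branch_weight g * x ^+ ([forall l, g l] + branch_received g) =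
  p * (branch_weight g * x ^+ branch_received g) +
  (if g == [ffun=> true] then (x - 1) * p * branch_weight g * x ^+ branch_received g
   else 0).
  by rewrite -forall_ffun_true; case: [forall l, g l]; rewrite ?exprS /=; ring.
under eq_bigr do rewrite split_all_true.
rewrite big_split /= -big_mkcond big_pred1_eq branch_weight_true branch_received_true.
by rewrite -!mulr_sumr exprS; ring.
Qed.

Lemma branch_gf_closed K :
  branch_gf K * (1 - p * x) = 1 - p + p ^+ K.+1 * x ^+ K * (1 - x).
Proof.
elim: K => [|K IH]; first by rewrite branch_gf0; ring.
by rewrite branch_gfS mulrDl IH !exprS; ring.
Qed.

End Branch.

Definition branches R K (w : config R K) : {ffun 'I_R -> {ffun 'I_K -> bool}} :=
  [ffun r => [ffun j => w (r, j)]].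

Lemma weight_branches (F : comNzRingType) (p : F) R K (w : config R K) :
  weight p w = \prod_(r < R) branch_weight p (branches w r).
Proof.
by rewrite /weight pair_big; apply: eq_bigr => -[r j] _; rewrite !ffunE.
Qed.

Lemma card_received_branches R K (w : config R K) :
  #|received w| = (\sum_(r < R) branch_received (branches w r))%N.
Proof.
rewrite -sum1_card big_mkcond /branch_received pair_big /=.
apply: eq_bigr => -[r j] _ /=.
rewrite inE /reaches /=.
by under [in RHS]eq_forallb do rewrite !ffunE; case: [forall l, _].
Qed.

Lemma gf_card_received (F : comNzRingType) (p x : F) R K :
  \sum_(w : config R K) weight p w * x ^+ #|received w| = branch_gf p x K ^+ R.
Proof.
rewrite -[R in RHS]card_ord -prodr_const bigA_distr_bigA /=.
rewrite (reindex (@branches R K)) /=; last first.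
  apply: onW_bij.
  exists (fun g : {ffun 'I_R -> {ffun 'I_K -> bool}} =>
            [ffun l => g l.1 l.2] : config R K).
  - by move=> w; apply/ffunP => -[r j]; rewrite !ffunE.
  - by move=> g; apply/ffunP => r; apply/ffunP => j; rewrite !ffunE.
apply: eq_bigr => w _.
by rewrite weight_branches card_received_branches -prodrXr -big_split.
Qed.

Lemma poly_eq_on_inj (F : idomainType) (f : nat -> F) (P Q : {poly F}) :
  injective f -> (forall k, P.[f k] = Q.[f k]) -> P = Q.
Proof.
move=> f_inj PQf; apply/eqP; rewrite -subr_eq0; apply/eqP.
apply: (@roots_geq_poly_eq0 _ _ (mkseq f (size (P - Q)))).
- by apply/allP => _ /mapP[k _ ->]; rewrite /root !hornerE PQf subrr.
- exact: mkseq_uniq.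
- by rewrite size_mkseq.
Qed.

Definition card_received_poly (F : nzRingType) R K (p : F) : {poly F} :=
  \sum_(w : config R K) weight p w *: 'X^#|received w|.

Lemma coef_card_received_poly (F : nzRingType) R K (p : F) i :
  (card_received_poly R K p)`_i = prob_card R K p i.
Proof.
rewrite coef_sum /prob_card [RHS]big_mkcond; apply: eq_bigr => w _.
by rewrite coefZ coefXn eq_sym; case: eqP; rewrite ?mulr1 ?mulr0.
Qed.

Lemma horner_card_received_poly (F : comNzRingType) R K (p x : F) :
  (card_received_poly R K p).[x] = branch_gf p x K ^+ R.
Proof.
rewrite -gf_card_received horner_sum.
by under eq_bigr do rewrite hornerZ hornerXn.
Qed.

Theorem lemma4 (F : realFieldType) (R K : nat) (p : F) (d : nat -> F) :
  (0 < R)%N -> (0 < K)%N -> 0 <= p <= 1 ->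
  (forall x : F, 1 - p * x != 0 ->
     ((1 - p + p ^+ K.+1 * x ^+ K * (1 - x)) / (1 - p * x)) ^+ R
       = \sum_(0 <= i < (R * K).+1) d i * x ^+ i) ->
  forall i : nat, (i <= R * K)%N -> prob_card R K p i = d i.
Proof.
move=> _ _ /andP[p_ge0 _] h_d i le_i_RK.
have neg_nat_inj : injective (fun k : nat => - (k%:R : F)).
  by move=> m n /oppr_inj /eqP; rewrite eqr_nat => /eqP.
have denom_neq0 (k : nat) : 1 - p * - k%:R != 0.
  by rewrite mulrN opprK lt0r_neq0 // ltr_pwDl // mulr_ge0.
have gf_coefs : card_received_poly R K p = \poly_(j < (R * K).+1) d j.
  apply: (poly_eq_on_inj neg_nat_inj) => k.
  rewrite horner_card_received_poly horner_poly.
  by have := h_d _ (denom_neq0 k); rewrite -(branch_gf_closed p) mulfK // big_mkord.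
by rewrite -coef_card_received_poly gf_coefs coef_poly ltnS le_i_RK.
Qed.
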